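(* Let $f(1),f(2),\dots$ be a non-negative, non-decreasing sequence of real numbers with $f(1)=0$. Define $$a(n):=n\sum_{i=1}^{n}\frac{f(i)}{i^2}\qquad(n\ge 1).$$ Then $a(n+m)\le a(n)+a(m)+f(n+m)$ for all integers $n,m\ge 1$. *)

From Stdlib Require Import Reals.
Open Scope R_scope.

(* a f n := n * sum_{i=1}^{n} f(i)/i^2, written with sum_f_R0 over
   j = 0..n-1 with i = j+1. Only meaningful for n >= 1. *)
Definition a_seq (f : nat -> R) (n : nat) : R :=
  INR n * sum_f_R0 (fun j => f (S j) / (INR (S j))^2) (Nat.pred n).

From Stdlib Require Import Reals Lra Lia Psatz.
Open Scope R_scope.

(* Write P(n) = sum_{i=1}^n f(i)/i^2, so a(n) = n P(n) and
   a(n+m) - a(n) - a(m) = n (P(n+m) - P(n)) + m (P(n+m) - P(m)).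
   Bounding f(i) by F = f(n+m) and 1/i^2 by 1/(i-1) - 1/i, the sum
   n (P(n+m) - P(n)) telescopes to at most F n (1/n - 1/(n+m)) = F m/(n+m);
   symmetrically the second term is at most F n/(n+m), and the two add up
   to F. *)

Lemma inv_sqr_succ_le_telescope (u F y : R) :
  0 <= u -> u <= F -> 0 < y -> u / (y + 1) ^ 2 <= F * (1 / y - 1 / (y + 1)).
Proof.
  intros Hu HuF Hy.
  assert (Hgap : F * (1 / y - 1 / (y + 1)) - u / (y + 1) ^ 2
                 = (F * (y + 1) - u * y) / (y * (y + 1) ^ 2)) by (field; lra).
  assert (0 <= (F * (y + 1) - u * y) / (y * (y + 1) ^ 2)).
  { unfold Rdiv; apply Rmult_le_pos; [nra | apply Rlt_le, Rinv_0_lt_compat].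
    apply Rmult_lt_0_compat; [lra | apply pow_lt; lra]. }
  lra.
Qed.

Section PartialSums.

Variable f : nat -> R.

Definition partial_sum (n : nat) : R :=
  sum_f_R0 (fun j => f (S j) / INR (S j) ^ 2) (Nat.pred n).

Lemma a_seq_partial_sum (n : nat) : a_seq f n = INR n * partial_sum n.
Proof. reflexivity. Qed.

Lemma partial_sum_succ (n : nat) : (1 <= n)%nat ->
  partial_sum (S n) = partial_sum n + f (S n) / INR (S n) ^ 2.
Proof. intros Hn. destruct n as [|p]; [lia | reflexivity]. Qed.

Variable F : R.

Lemma partial_sum_gap_le (n k : nat) : (1 <= n)%nat ->
  (forall i, (1 <= i)%nat -> (i <= n + k)%nat -> 0 <= f i <= F) ->
  partial_sum (n + k) - partial_sum n <= F * (1 / INR n - 1 / INR (n + k)).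
Proof.
  intros Hn. induction k as [|k IH]; intros Hf.
  - rewrite Nat.add_0_r.
    destruct (Hf n) as [Hfn HfnF]; [lia | lia | lra].
  - rewrite Nat.add_succ_r, partial_sum_succ by lia.
    assert (IHk := IH (fun i h1 h2 => Hf i h1 ltac:(lia))).
    assert (Hpos : 0 < INR (n + k)) by (apply lt_0_INR; lia).
    destruct (Hf (S (n + k))) as [Hlo Hhi]; [lia | lia |].
    assert (Hstep := inv_sqr_succ_le_telescope _ _ _ Hlo Hhi Hpos).
    rewrite S_INR. lra.
Qed.

Lemma scaled_partial_sum_gap_le (n k : nat) : (1 <= n)%nat ->
  (forall i, (1 <= i)%nat -> (i <= n + k)%nat -> 0 <= f i <= F) ->
  INR n * (partial_sum (n + k) - partial_sum n) <= F * (INR k / INR (n + k)).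
Proof.
  intros Hn Hf.
  assert (Hn0 : 0 < INR n) by (apply lt_0_INR; lia).
  assert (Hnk : 0 < INR (n + k)) by (apply lt_0_INR; lia).
  assert (Htel : INR n * (1 / INR n - 1 / INR (n + k)) = INR k / INR (n + k))
    by (rewrite plus_INR in *; field; lra).
  rewrite <- Htel, <- Rmult_assoc, (Rmult_comm F), Rmult_assoc.
  apply Rmult_le_compat_l; [lra | exact (partial_sum_gap_le n k Hn Hf)].
Qed.

End PartialSums.

Theorem claim6p1 (f : nat -> R)
  (hnonneg : forall i : nat, (1 <= i)%nat -> 0 <= f i)
  (hmono : forall i j : nat, (1 <= i)%nat -> (i <= j)%nat -> f i <= f j)
  (hf1 : f 1%nat = 0) :
  forall n m : nat, (1 <= n)%nat -> (1 <= m)%nat ->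
    a_seq f (n + m) <= a_seq f n + a_seq f m + f (n + m)%nat.
Proof.
  intros n m Hn Hm.
  set (F := f (n + m)%nat).
  assert (Hf : forall i, (1 <= i)%nat -> (i <= n + m)%nat -> 0 <= f i <= F)
    by (intros i h1 h2; split; [apply hnonneg | apply hmono]; auto).
  assert (Bn := scaled_partial_sum_gap_le f F n m Hn Hf).
  assert (Bm := scaled_partial_sum_gap_le f F m n Hm
                  ltac:(intros i h1 h2; apply Hf; lia)).
  rewrite Nat.add_comm in Bm.
  assert (Hsplit : F * (INR m / INR (n + m)) + F * (INR n / INR (n + m)) = F).
  { assert (0 < INR (n + m)) by (apply lt_0_INR; lia).
    rewrite plus_INR in *. field. lra. }
  rewrite !a_seq_partial_sum, plus_INR. lra.
Qed.
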